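(* Let $\mathbb{T}$ be the $m$-regular tree, and let $L_1$, $L_2$ be the averaging operators on $\mathbb{T}$ with parameters $\beta_1,\beta_2\in[0,1]$ respectively. Let $h_1,h_2:\mathbb{T}\to\mathbb{R}$ and let $f,g:[0,1]\to\mathbb{R}$ be continuous with $f(s)>g(s)$ for all $s\in[0,1]$. Assume that $0\le \beta_1<\tfrac12$, $0\le\beta_2<\tfrac12$, that the series defining $S^{\beta_1}_{h_1}(x)$ and $S^{\beta_2}_{h_2}(x)$ converge for every $x\in\mathbb{T}$, and that for $i=1,2$ $$\lim_{k\to\infty}\ \sup_{x\in\mathbb{T},\,|x|=k}\ \Big|\sum_{j=1}^{k}\Big(\frac{\beta_i}{1-\beta_i}\Big)^{k-j} S^{\beta_i}_{h_i}(x^j)\Big| = 0 .$$ Then there exists a pair of functions $u,v:\mathbb{T}\to\mathbb{R}$ solving the two membranes problem, i.e. $$\max\big\{-L_1(u)(x)+h_1(x),\ v(x)-u(x)\big\}=0,\qquad \min\big\{-L_2(v)(x)+h_2(x),\ u(x)-v(x)\big\}=0\qquad\text{for all }x\in\mathbb{T},$$ with $u|_{\partial\mathbb{T}}=f$ and $v|_{\partial\mathbb{T}}=g$. Moreover, the coincidence set $\{x\in\mathbb{T}: u(x)=v(x)\}$ of this solution is finite.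
   Context: The $m$-regular tree $\mathbb{T}$ ($m\ge 2$): its nodes are the root $\emptyset$ and all finite tuples $x=(a_1,\dots,a_k)$ with $a_i\in\{0,\dots,m-1\}$; $|x|=k$ is the level of $x$ ($|\emptyset|=0$). For $x\neq\emptyset$, $\hat x$ denotes its predecessor (delete the last entry). $S^l(x)$ is the set of the $m^l$ successors of $x$ at level $|x|+l$ (tuples extending $x$ by $l$ entries), $S^0(x)=\{x\}$. For $|x|=k$ and $1\le j\le k$, $x^j$ is the predecessor of $x$ at level $j$ (so $x^k=x$). A branch $z$ is an infinite sequence $(a_1,a_2,\dots)$, equivalently the sequence of nodes $z_n=(a_1,\dots,a_n)$; $\partial\mathbb{T}$ is the set of branches, and $\psi(z)=\sum_{k\ge1}a_k m^{-k}\in[0,1]$. A branch $z$ passes through $x$ if $x=z_{|x|}$. Averaging operator with parameter $\beta\in[0,1]$: for $u:\mathbb{T}\to\mathbb{R}$, $L(u)(x)=u(x)-\beta u(\hat x)-(1-\beta)\frac1m\sum_{y\in S^1(x)}u(y)$ for $x\ne\emptyset$, and $L(u)(\emptyset)=u(\emptyset)-\frac1m\sum_{y\in S^1(\emptyset)}u(y)$. Boundary condition: $u|_{\partial\mathbb{T}}=f$ means the uniform limit: for every $\varepsilon>0$ there is $K$ such that $|u(x)-f(\psi(z))|<\varepsilon$ for every node $x$ with $|x|\ge K$ and every branch $z$ passing through $x$. For $\beta\in[0,1)$ and $h:\mathbb{T}\to\mathbb{R}$, $S^\beta_h(x)=\sum_{i=1}^\infty\sum_{j=0}^{i-1}\frac{\beta^{i-j-1}}{(1-\beta)^{i-j}}\,\frac{1}{m^j}\sum_{y\in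 S^j(x)}h(y)$ (for $\beta>0$ this equals $\frac1\beta\sum_{i\ge1}\sum_{j=0}^{i-1}(\frac{\beta}{1-\beta})^{i-j}m^{-j}\sum_{y\in S^j(x)}h(y)$). The convention $0^0=1$ is used. *)

From HB Require Import structures.
From mathcomp Require Import all_boot all_order all_algebra.
From mathcomp Require Import all_classical all_reals all_analysis.
Set Implicit Arguments. Unset Strict Implicit. Unset Printing Implicit Defensive.
Import Order.TTheory GRing.Theory Num.Theory.
Import numFieldNormedType.Exports.
Local Open Scope classical_set_scope.
Local Open Scope ring_scope.

(* Nodes of the m-regular tree: finite sequences with entries in 'I_m;
   the level |x| is size x; the root is [::]. *)
Definition node (m : nat) := seq 'I_m.

Definition pred_node (m : nat) (x : node m) : node m := take (size x).-1 x.

Definition anc (m : nat) (x : node m) (j : nat) : node m := take j x.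

Definition avg_succ (R : realType) (m : nat) (h : node m -> R) (j : nat)
  (x : node m) : R :=
  (m%:R ^+ j)^-1 * \sum_(t : j.-tuple 'I_m) h (x ++ tval t).

Definition Lop (R : realType) (m : nat) (beta : R) (u : node m -> R)
  (x : node m) : R :=
  if x is [::] then u x - avg_succ u 1 x
  else u x - beta * u (pred_node x) - (1 - beta) * avg_succ u 1 x.

Definition S_term (R : realType) (m : nat) (beta : R) (h : node m -> R)
  (x : node m) (i : nat) : R :=
  \sum_(j < i) (beta ^+ (i - j - 1) / (1 - beta) ^+ (i - j)) * avg_succ h j x.

Definition S_partial (R : realType) (m : nat) (beta : R) (h : node m -> R)
  (x : node m) (n : nat) : R :=
  \sum_(1 <= i < n.+1) S_term beta h x i.

Definition S_conv (R : realType) (m : nat) (beta : R) (h : node m -> R)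
  (x : node m) : Prop := cvg (S_partial beta h x @ \oo).

Definition S_val (R : realType) (m : nat) (beta : R) (h : node m -> R)
  (x : node m) : R := lim (S_partial beta h x @ \oo).

(* sup over nodes of level k of | sum_{j=1}^k (beta/(1-beta))^(k-j) S(x^j) | ;
   the level-k nodes are the k-tuples (finitely many, nonempty for m >= 1) *)
Definition S_sup (R : realType) (m : nat) (beta : R) (h : node m -> R)
  (k : nat) : R :=
  \big[Num.max/0]_(x : k.-tuple 'I_m)
     `| \sum_(1 <= j < k.+1) (beta / (1 - beta)) ^+ (k - j)
          * S_val beta h (anc (tval x) j) |.

Definition branch (m : nat) := nat -> 'I_m.

Definition psi (R : realType) (m : nat) (z : branch m) : R :=
  lim ((fun n => \sum_(k < n) ((z k : nat)%:R / m%:R ^+ k.+1 : R)) @ \oo).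

Definition passes (m : nat) (z : branch m) (x : node m) : Prop :=
  x = mkseq z (size x).

(* u|_{\partial T} = f  (uniform limit) *)
Definition boundary_eq (R : realType) (m : nat) (u : node m -> R)
  (f : R -> R) : Prop :=
  forall eps : R, 0 < eps -> exists K : nat, forall (x : node m) (z : branch m),
    (K <= size x)%N -> passes z x -> `| u x - f (psi R z) | < eps.

From HB Require Import structures.
From mathcomp Require Import all_boot all_order all_algebra.
From mathcomp Require Import all_classical all_reals all_analysis.
From mathcomp Require Import ring lra zify.
Import Order.TTheory GRing.Theory Num.Theory.
Import numFieldNormedType.Exports.
Local Open Scope classical_set_scope.
Local Open Scope ring_scope.
Set Implicit Arguments. Unset Strict Implicit. Unset Printing Implicit Defensive.

(* The membrane u solves the Dirichlet problem L1 u = h1, u = f on the boundary, and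
   v is the largest L2-subsolution below both u and the solution V of L2 V = h2, V = g.

   With r = beta / (1 - beta), the path sum
   x |-> sum_(j <= |x|) r^(|x| - j) D(x^j) turns the mean-value defect D - avg D into
   L-data, so D = (1 - r) (S^beta_h + w_f), w_f the mean-value extension of f, gives
   L U = h off the root; a multiple of the L-harmonic function r^|x| fixes the root, and
   the decay of S^beta_h along branches together with the uniform continuity of f gives
   U = f on the boundary.

   Since f > g, V < u beyond some level N, so the obstacle only acts on the finite ball
   |x| <= N.  There v is obtained by Perron's method among functions continued beyond
   level N by V plus an r-damped, hence L2-harmonic, correction.  Where v < u on the
   ball, maximality of v forces L2 v = h2; beyond the ball v <= V < u, so the contact
   set is finite. *)

Lemma sum_tuple0 (V : nmodType) (T : finType) (F : 0.-tuple T -> V) :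
  \sum_(t : 0.-tuple T) F t = F [tuple].
Proof.
rewrite (big_pred1 [tuple]) // => t /=.
by rewrite (tuple0 t); apply/esym/eqP.
Qed.

Lemma sum_tupleS (V : nmodType) (T : finType) n (F : n.+1.-tuple T -> V) :
  \sum_(t : n.+1.-tuple T) F t = \sum_(a : T) \sum_(t : n.-tuple T) F [tuple of a :: t].
Proof.
rewrite pair_big /= (reindex (fun p : T * n.-tuple T => [tuple of p.1 :: p.2])) //=.
exists (fun t => (thead t, [tuple of behead t])) => [[a t] _|t _] /=.
  by congr pair; apply: val_inj.
by apply: val_inj => /=; case: t => -[|a s] //= _.
Qed.

Section ChildAverage.
Variables (R : realType) (m : nat).
Hypothesis m_gt0 : (0 < m)%N.
Implicit Types (u v : node m -> R) (x : node m).

Definition child_avg u x : R := m%:R^-1 * \sum_(i < m) u (rcons x i).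

Lemma child_avgD u v x :
  child_avg (fun y => u y + v y) x = child_avg u x + child_avg v x.
Proof. by rewrite /child_avg big_split mulrDr. Qed.

Lemma child_avgZ (a : R) u x : child_avg (fun y => a * u y) x = a * child_avg u x.
Proof. by rewrite /child_avg -mulr_sumr mulrCA. Qed.

Lemma child_avg_sum n (G : 'I_n -> node m -> R) x :
  child_avg (fun y => \sum_(k < n) G k y) x = \sum_(k < n) child_avg (G k) x.
Proof. by rewrite /child_avg exchange_big mulr_sumr. Qed.

Lemma eq_child_avg u v x :
  (forall i, u (rcons x i) = v (rcons x i)) -> child_avg u x = child_avg v x.
Proof. by move=> uv; rewrite /child_avg; congr (_ * _); apply: eq_bigr => i _. Qed.

Lemma ler_child_avg u v x :
  (forall i, u (rcons x i) <= v (rcons x i)) -> child_avg u x <= child_avg v x.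
Proof. by move=> uv; rewrite ler_wpM2l ?invr_ge0 ?ler0n //; apply: ler_sum. Qed.

Lemma child_avg_ge0 u x : (forall y, 0 <= u y) -> 0 <= child_avg u x.
Proof. by move=> u0; rewrite mulr_ge0 ?invr_ge0 ?ler0n ?sumr_ge0. Qed.

Lemma child_avg_cst (c : R) x : child_avg (fun _ => c) x = c.
Proof.
have m0 : (m%:R : R) != 0 by rewrite pnatr_eq0 -lt0n.
by rewrite /child_avg sumr_const card_ord -[c *+ _]mulr_natl mulrA mulVf ?mul1r.
Qed.

Lemma child_avg_cvg (s : node m -> nat -> R) (l : node m -> R) x :
  (forall i, s (rcons x i) n @[n --> \oo] --> l (rcons x i)) ->
  child_avg (fun y => s y n) x @[n --> \oo] --> child_avg l x.
Proof.
by move=> sl; apply: cvgMl_tmp; apply: cvg_big => //; exact: add_continuous.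
Qed.

Lemma avg_succ0 (h : node m -> R) x : avg_succ h 0 x = h x.
Proof. by rewrite /avg_succ expr0 invr1 mul1r sum_tuple0 /= cats0. Qed.

Lemma avg_succS (h : node m -> R) j x :
  avg_succ h j.+1 x = child_avg (avg_succ h j) x.
Proof.
rewrite /avg_succ /child_avg sum_tupleS exprS invfM -mulrA mulr_sumr.
congr (_ * _); apply: eq_bigr => a _; congr (_ * _); apply: eq_bigr => t _.
by rewrite /= cat_rcons.
Qed.

Lemma avg_succ1 (h : node m -> R) x : avg_succ h 1 x = child_avg h x.
Proof. by rewrite avg_succS; apply: eq_child_avg => i; rewrite avg_succ0. Qed.

Lemma avg_succ_comp (h : node m -> R) n l x :
  avg_succ (avg_succ h l) n x = avg_succ h (n + l) x.
Proof.
elim: n x => [|n IH] x; first by rewrite avg_succ0.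
by rewrite avg_succS addSn avg_succS; apply: eq_child_avg => i; rewrite IH.
Qed.

Lemma avg_succB u v n x :
  avg_succ (fun y => u y - v y) n x = avg_succ u n x - avg_succ v n x.
Proof. by rewrite /avg_succ sumrB mulrBr. Qed.

Lemma avg_succ_dist_le (F : node m -> R) n x (c e : R) :
  (forall t : n.-tuple 'I_m, `|F (x ++ t) - c| <= e) -> `|avg_succ F n x - c| <= e.
Proof.
move=> Fc.
have mn0 : (m%:R ^+ n : R) != 0 by rewrite expf_neq0 // pnatr_eq0 -lt0n.
have -> : avg_succ F n x - c =
    (m%:R ^+ n)^-1 * \sum_(t : n.-tuple 'I_m) (F (x ++ t) - c).
  rewrite /avg_succ sumrB sumr_const card_tuple card_ord mulrBr; congr (_ - _).
  by rewrite -[c *+ _]mulr_natr natrX; field.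
rewrite normrM ger0_norm ?invr_ge0 ?exprn_ge0 ?ler0n // ler_pdivrMl; last first.
  by rewrite exprn_gt0 // ltr0n.
apply: le_trans (ler_norm_sum _ _ _) _.
apply: le_trans (_ : _ <= \sum_(t : n.-tuple 'I_m) e) _; first exact: ler_sum.
by rewrite sumr_const card_tuple card_ord -[e *+ _]mulr_natr natrX mulrC.
Qed.

End ChildAverage.

Section AveragingOperator.
Variables (R : realType) (m : nat).
Hypothesis m_gt0 : (0 < m)%N.
Variable beta : R.
Implicit Types (u d : node m -> R) (x : node m).

Lemma pred_node_rcons x i : pred_node (rcons x i) = x.
Proof. by rewrite /pred_node size_rcons -cats1 /= take_size_cat. Qed.

Lemma Lop_nil u : Lop beta u [::] = u [::] - child_avg u [::].
Proof. by rewrite /Lop avg_succ1. Qed.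

Lemma Lop_rcons u x i :
  Lop beta u (rcons x i) =
  u (rcons x i) - beta * u x - (1 - beta) * child_avg u (rcons x i).
Proof.
have -> : Lop beta u (rcons x i) = u (rcons x i) - beta * u (pred_node (rcons x i))
    - (1 - beta) * child_avg u (rcons x i).
  by case: x => [|a s] /=; rewrite avg_succ1.
by rewrite pred_node_rcons.
Qed.

Lemma Lop_lin u v (a : R) x :
  Lop beta (fun y => u y + a * v y) x = Lop beta u x + a * Lop beta v x.
Proof.
case/lastP: x => [|x i]; rewrite ?Lop_nil ?Lop_rcons child_avgD child_avgZ; ring.
Qed.

Lemma LopB u v x : Lop beta (fun y => u y - v y) x = Lop beta u x - Lop beta v x.
Proof.
have -> : (fun y => u y - v y) = (fun y => u y + -1 * v y).
  by apply/funext => y; rewrite mulN1r.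
by rewrite Lop_lin mulN1r.
Qed.

Hypotheses (beta_ge0 : 0 <= beta) (beta_le1 : beta <= 1).

Lemma Lop_le_of_ge0 d x : (forall y, 0 <= d y) -> Lop beta d x <= d x.
Proof.
move=> d0; have avg0 := child_avg_ge0 x d0.
case/lastP: x avg0 => [|x i] avg0; first by rewrite Lop_nil lerBlDr lerDl.
have beta' : 0 <= 1 - beta by rewrite subr_ge0.
rewrite Lop_rcons; have := mulr_ge0 beta_ge0 (d0 x); have := mulr_ge0 beta' avg0.
lra.
Qed.

Lemma Lop_ge0_at_max d x : (forall y, d y <= d x) -> 0 <= Lop beta d x.
Proof.
move=> dmax.
have avg_le : child_avg d x <= d x.
  by rewrite -[leRHS](child_avg_cst m_gt0 (d x) x); apply: ler_child_avg.
case/lastP: x dmax avg_le => [|x i] dmax avg_le; first by rewrite Lop_nil subr_ge0.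
rewrite Lop_rcons.
have := ler_wpM2l beta_ge0 (dmax x).
have beta' : 0 <= 1 - beta by rewrite subr_ge0.
have := ler_wpM2l beta' avg_le; lra.
Qed.

End AveragingOperator.

Section TreeCoordinates.
Variables (R : realType) (m : nat).
Hypothesis m_gt0 : (0 < m)%N.
Implicit Types (x t : node m) (z : branch m).

Fixpoint cell_left x : R :=
  if x is i :: x' then ((i : nat)%:R + cell_left x') / m%:R else 0.

Let m_neq0 : (m%:R : R) != 0. Proof. by rewrite pnatr_eq0 -lt0n. Qed.
Let width_gt0 k : (0 : R) < (m%:R ^+ k)^-1.
Proof. by rewrite invr_gt0 exprn_gt0 // ltr0n. Qed.

Lemma cell_left_cat x t :
  cell_left (x ++ t) = cell_left x + cell_left t / m%:R ^+ size x.
Proof.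
elim: x => [|i x IH] /=; first by rewrite expr0 divr1 add0r.
by rewrite IH exprS; field; rewrite m_neq0 expf_neq0.
Qed.

Lemma cell_left_bounds t : 0 <= cell_left t <= 1 - (m%:R ^+ size t)^-1.
Proof.
have m0 : (0 : R) < m%:R by rewrite ltr0n.
elim: t => [|i t /andP [IH1 IH2]] /=; first by rewrite expr0 invr1 subrr lexx.
rewrite divr_ge0 ?addr_ge0 ?ler0n ?(ltW m0) //=.
have hi : ((i : nat)%:R : R) <= m%:R - 1 by rewrite lerBrDr natr1 ler_nat ltn_ord.
apply: (@le_trans _ _ ((m%:R - (m%:R ^+ size t)^-1) / m%:R)).
  by rewrite ler_wpM2r ?invr_ge0 ?ler0n //; lra.
rewrite exprS invfM le_eqVlt; apply/orP; left; apply/eqP; field.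
by rewrite m_neq0 expf_neq0.
Qed.

Lemma cell_left_in01 t : 0 <= cell_left t <= 1.
Proof.
have /andP [t0 t1] := cell_left_bounds t.
by rewrite t0 (le_trans t1) // lerBlDr lerDl ltW.
Qed.

Lemma cell_left_cat_in_cell x t :
  cell_left x <= cell_left (x ++ t) <= cell_left x + (m%:R ^+ size x)^-1.
Proof.
have /andP [t0 t1] := cell_left_bounds t.
rewrite cell_left_cat lerDl divr_ge0 ?exprn_ge0 ?ler0n //= lerD2l.
rewrite ler_pdivrMr ?exprn_gt0 ?ltr0n // mulVf ?expf_neq0 //.
by apply: le_trans t1 _; rewrite lerBlDr lerDl ltW.
Qed.

Lemma mkseq_prefix z k n : (k <= n)%N -> exists t, mkseq z n = mkseq z k ++ t.
Proof.
elim: n => [|n IH]; first by rewrite leqn0 => /eqP ->; exists [::]; rewrite cats0.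
rewrite leq_eqVlt => /orP [/eqP ->|]; first by exists [::]; rewrite cats0.
by rewrite ltnS => /IH [t Ht]; exists (rcons t (z n)); rewrite mkseqS Ht rcons_cat.
Qed.

Lemma passes_take z x j : passes z x -> (j <= size x)%N -> passes z (take j x).
Proof.
move=> zx jx; rewrite /passes size_takel // {1}zx.
by have [t ->] := mkseq_prefix z jx; rewrite -{1}(size_mkseq z j) take_size_cat.
Qed.

Definition psi_partial z n : R := \sum_(k < n) ((z k : nat)%:R / m%:R ^+ k.+1).

Lemma psi_partialE z n : psi_partial z n = cell_left (mkseq z n).
Proof.
elim: n => [|n IH]; first by rewrite /psi_partial big_ord0.
rewrite mkseqS -cats1 cell_left_cat size_mkseq -IH /psi_partial big_ord_recr /=.
by rewrite exprSr; field; rewrite m_neq0 expf_neq0.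
Qed.

Lemma psi_partial_cvg z : cvgn (psi_partial z).
Proof.
apply: nondecreasing_is_cvgn.
  apply/nondecreasing_seqP => n.
  by rewrite /psi_partial big_ord_recr /= lerDl divr_ge0 ?ler0n // exprn_ge0 ?ler0n.
exists 1 => _ [n _ <-]; rewrite psi_partialE.
by have /andP [] := cell_left_in01 (mkseq z n).
Qed.

Lemma psi_in_cell z x :
  passes z x -> cell_left x <= psi R z <= cell_left x + (m%:R ^+ size x)^-1.
Proof.
move=> zx.
have near_psi n : (size x <= n)%N ->
    cell_left x <= psi_partial z n <= cell_left x + (m%:R ^+ size x)^-1.
  move=> xn; rewrite psi_partialE; have [t ->] := mkseq_prefix z xn.
  by rewrite -zx; exact: cell_left_cat_in_cell.
rewrite -/(lim (psi_partial z @ \oo)); apply/andP; split.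
  apply: limr_ge; first exact: psi_partial_cvg.
  by exists (size x) => // n /= /near_psi /andP [].
apply: limr_le; first exact: psi_partial_cvg.
by exists (size x) => // n /= /near_psi /andP [].
Qed.

Lemma psi_in01 z : 0 <= psi R z <= 1.
Proof. by have := psi_in_cell (x := [::]) (z := z) erefl; rewrite /= expr0 invr1 add0r. Qed.

End TreeCoordinates.

Section RealFacts.
Variable R : realType.

Lemma limn_dist_le (u : nat -> R) (c e : R) :
  cvgn u -> (forall n, `|u n - c| <= e) -> `|limn u - c| <= e.
Proof.
move=> cu ue; rewrite ler_distl; apply/andP; split.
  apply: limr_ge => //; exists 0%N => // n _ /=.
  by have := ue n; rewrite ler_distl => /andP [].
apply: limr_le => //; exists 0%N => // n _ /=.
by have := ue n; rewrite ler_distl => /andP [].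
Qed.

Lemma expr_lt_eventually (z d : R) : 0 <= z -> z < 1 -> 0 < d ->
  exists N, forall n, (N <= n)%N -> z ^+ n < d.
Proof.
move=> z0 z1 d0.
have z_lt1 : `|z| < 1 by rewrite ger0_norm.
have /cvgr_dist_lt /(_ d d0) [N _ zN] := cvg_expr z_lt1.
by exists N => n /zN /=; rewrite sub0r normrN; apply: le_lt_trans; exact: ler_norm.
Qed.

Lemma expr_scale_lt_eventually (z C d : R) : 0 <= z -> z < 1 -> 0 <= C -> 0 < d ->
  exists N, forall n, (N <= n)%N -> z ^+ n * C < d.
Proof.
move=> z0 z1 C0 d0; have C1 : 0 < C + 1 by rewrite ltr_wpDl.
have [N zN] := expr_lt_eventually z0 z1 (divr_gt0 d0 C1).
exists N => n /zN; rewrite ltr_pdivlMr // => zd.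
by apply: le_lt_trans zd; rewrite ler_wpM2l ?exprn_ge0 // lerDl.
Qed.

Lemma inv_expr_lt_eventually (m : nat) (d : R) : (1 < m)%N -> 0 < d ->
  exists N, forall n, (N <= n)%N -> (m%:R ^+ n : R)^-1 < d.
Proof.
move=> m_gt1 d0; have m0 : (0 : R) < m%:R by rewrite ltr0n ltnW.
have z0 : (0 : R) <= m%:R^-1 by rewrite invr_ge0 ltW.
have z1 : (m%:R^-1 : R) < 1 by rewrite invf_lt1 // ltr1n.
have [N mN] := expr_lt_eventually z0 z1 d0.
by exists N => n /mN; rewrite exprVn.
Qed.

Definition unif_modulus (f : R -> R) (e d : R) : Prop := forall s t : R,
  0 <= s <= 1 -> 0 <= t <= 1 -> `|s - t| < d -> `|f s - f t| < e.

Lemma within_continuous_dist (f : R -> R) (A : set R) :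
  {within A, continuous f} -> forall x, A x -> forall e : R, 0 < e ->
  exists2 d : R, 0 < d & forall s, A s -> `|s - x| < d -> `|f s - f x| < e.
Proof.
move=> /subspace_continuousP fA x Ax e e0.
have /cvgr_dist_lt /(_ e e0) /nbhs_ballP [d d0 fd] := fA x Ax.
exists d => // s As sx.
have : ball x d s by rewrite /ball /= distrC.
by move=> /fd /(_ As) /=; rewrite distrC.
Qed.

Lemma unif_continuous01 (f : R -> R) : {within `[0, 1], continuous f} ->
  forall e : R, 0 < e -> exists2 d : R, 0 < d & unif_modulus f e d.
Proof.
move=> f_cont e e0.
set K : set R := `[0, 1]%classic.
have /compact_near_coveringP/near_covering_withinP cover : compact K.
  exact: segment_compact.
(* Heine-Cantor: a finite cover of [0, 1] by balls on which f oscillates by < e. *)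
have : \forall d \near (0:R)^'+, K `<=` (fun x => forall s, K s ->
    `|s - x| < d -> `|f s - f x| < e).
  apply: cover => x Kx.
  have e20 : 0 < e / 2 by rewrite divr_gt0.
  have [eta eta0 f_eta] := within_continuous_dist f_cont Kx e20.
  have eta20 : 0 < eta / 2 by rewrite divr_gt0.
  near=> x' d => Kx' s Ks sx'; rewrite /= in Kx' sx' *.
  have x'x : `|x' - x| < eta / 2.
    near: x'; apply/nbhs_ballP; exists (eta / 2) => // y /=.
    by rewrite /ball /= distrC.
  have d_lt : d < eta / 2 by near: d; apply: nbhs_right_lt.
  have sx : `|s - x| < eta.
    have -> : s - x = (s - x') + (x' - x) by rewrite subrKA.
    apply: le_lt_trans (ler_normD _ _) _; lra.
  have x'x_eta : `|x' - x| < eta by lra.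
  have := f_eta s Ks sx; have := f_eta x' Kx' x'x_eta.
  have -> : f s - f x' = (f s - f x) - (f x' - f x) by rewrite opprB addrA subrK.
  move=> ha hb; apply: le_lt_trans (ler_normB _ _) _; lra.
move=> fK; have [d [d0 fd]] := filter_ex (filterI (nbhs_right_gt 0) fK).
exists d => // s t s01 t01 st.
by apply: (fd t _ s _ st); rewrite /K /= in_itv /=.
Unshelve. all: by end_near.
Qed.

Lemma bounded01 (f : R -> R) : {within `[0, 1], continuous f} ->
  exists M : R, forall s, 0 <= s <= 1 -> `|f s| <= M.
Proof.
move=> f_cont.
have [c1 _ f_max] := EVT_max (@ler01 R) f_cont.
have [c2 _ f_min] := EVT_min (@ler01 R) f_cont.
exists (`|f c1| + `|f c2|) => s s01.
have s01' : s \in `[0, 1]%R by rewrite in_itv /=.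
have := f_max s s01'; have := f_min s s01'.
have := ler_norm (f c1); have := ler_norm (- f c2); rewrite normrN.
have := normr_ge0 (f c1); have := normr_ge0 (f c2).
rewrite ler_norml; lra.
Qed.

End RealFacts.

Section MeanValueExtension.
Variables (R : realType) (m : nat) (f : R -> R).
Hypothesis m_gt1 : (1 < m)%N.
Let m_gt0 : (0 < m)%N := ltnW m_gt1.
Implicit Types (x : node m) (e d s : R).

Definition bnd_data (y : node m) : R := f (cell_left R y).

Definition mv_ext x : R := limn (fun n => avg_succ bnd_data n x).

Lemma avg_bnd_data_close e d x s n : unif_modulus f e d ->
  (m%:R ^+ size x)^-1 < d ->
  cell_left R x <= s <= cell_left R x + (m%:R ^+ size x)^-1 -> 0 <= s <= 1 ->
  `|avg_succ bnd_data n x - f s| <= e.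
Proof.
move=> f_mod width_lt /andP [xs sx] s01; apply: avg_succ_dist_le => // t.
apply/ltW/f_mod => //; first exact: cell_left_in01.
have /andP [xt tx] := cell_left_cat_in_cell R m_gt0 x t.
by apply: le_lt_trans width_lt; rewrite ler_distl; apply/andP; split; lra.
Qed.

Hypothesis f_cont : {within `[0, 1], continuous f}.

Lemma mv_ext_cvg x : cvgn (fun n => avg_succ bnd_data n x).
Proof.
apply: cauchy_cvg; apply: cauchy_exP => e e0.
have e20 : 0 < e / 2 by rewrite divr_gt0.
have [d d0 f_mod] := unif_continuous01 f_cont e20.
have [N mN] := inv_expr_lt_eventually m_gt1 d0.
exists (avg_succ bnd_data N x), N => // n /= Nn.
rewrite /ball /= -(subnKC Nn) distrC -avg_succ_comp -avg_succB.
rewrite -[X in `|X|]subr0; apply: le_lt_trans (_ : _ <= e / 2) _; last first.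
  by rewrite ltr_pdivrMr // ltr_pMr // ltr1n.
apply: avg_succ_dist_le => // t; rewrite subr0.
apply: (avg_bnd_data_close _ f_mod); last exact: cell_left_in01.
  by rewrite size_cat size_tuple; apply: mN; rewrite leq_addl.
by rewrite lexx lerDl invr_ge0 exprn_ge0 ?ler0n.
Qed.

Lemma mv_ext_close e d x s : unif_modulus f e d -> (m%:R ^+ size x)^-1 < d ->
  cell_left R x <= s <= cell_left R x + (m%:R ^+ size x)^-1 -> 0 <= s <= 1 ->
  `|mv_ext x - f s| <= e.
Proof.
move=> f_mod width_lt xs s01; rewrite /mv_ext; apply: limn_dist_le; first exact: mv_ext_cvg.
by move=> n; apply: (avg_bnd_data_close _ f_mod).
Qed.

Lemma mv_ext_bounded (M : R) x :
  (forall s, 0 <= s <= 1 -> `|f s| <= M) -> `|mv_ext x| <= M.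
Proof.
move=> fM; rewrite -[mv_ext x]subr0 /mv_ext; apply: limn_dist_le; first exact: mv_ext_cvg.
move=> n; apply: avg_succ_dist_le => // t; rewrite subr0; apply: fM.
exact: cell_left_in01.
Qed.

Lemma child_avg_mv_ext x : child_avg mv_ext x = mv_ext x.
Proof.
have avg_cvg : child_avg (avg_succ bnd_data n) x @[n --> \oo] --> child_avg mv_ext x.
  by apply: child_avg_cvg => i; apply: mv_ext_cvg.
have : avg_succ bnd_data n x @[n --> \oo] --> child_avg mv_ext x.
  rewrite -cvg_shiftS; apply: cvg_trans avg_cvg; apply: near_eq_cvg.
  by near=> n; rewrite /= avg_succS.
by move=> /cvg_lim lim_eq; rewrite [RHS]/mv_ext lim_eq.
Unshelve. all: by end_near.
Qed.

End MeanValueExtension.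

Section SeriesS.
Variables (R : realType) (m : nat) (beta : R) (h : node m -> R).
Implicit Types (x : node m).

Definition S_coef (k : nat) : R := beta ^+ (k - 1) / (1 - beta) ^+ k.

Lemma S_termE x i : S_term beta h x i = \sum_(j < i) S_coef (i - j) * avg_succ h j x.
Proof. by []. Qed.

Lemma S_partialE x n : S_partial beta h x n = \sum_(i < n) S_term beta h x i.+1.
Proof. by rewrite /S_partial big_add1 /= big_mkord. Qed.

Lemma child_avg_S_term x i :
  child_avg (fun y => S_term beta h y i) x = S_term beta h x i.+1 - S_coef i.+1 * h x.
Proof.
transitivity (\sum_(j < i) S_coef (i - j) * avg_succ h j.+1 x).
  under eq_fun do rewrite S_termE.
  by rewrite child_avg_sum; apply: eq_bigr => j _; rewrite child_avgZ avg_succS.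
rewrite S_termE big_ord_recl /= subn0 avg_succ0 addrAC subrr add0r.
by apply: eq_bigr => j _; rewrite /bump /= add1n subSS.
Qed.

Definition S_coef_sum (n : nat) : R := \sum_(i < n) S_coef i.+1.

Lemma child_avg_S_partial x n :
  child_avg (fun y => S_partial beta h y n) x =
  S_partial beta h x n.+1 - h x * S_coef_sum n.+1.
Proof.
under eq_fun do rewrite S_partialE.
rewrite child_avg_sum; under eq_bigr do rewrite child_avg_S_term.
rewrite S_partialE /S_coef_sum big_ord_recl [X in _ * X]big_ord_recl /=.
have -> : S_term beta h x 1 = S_coef 1 * h x.
  by rewrite S_termE big_ord_recl big_ord0 addr0 /= subn0 avg_succ0.
rewrite sumrB mulrDr mulr_sumr.
under [X in _ = _ - (_ + X)]eq_bigr do rewrite mulrC.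
ring.
Qed.

Lemma S_coef_sum_cvg : 0 <= beta -> beta < 1 / 2 ->
  S_coef_sum n @[n --> \oo] --> (1 - 2 * beta)^-1.
Proof.
move=> beta_ge0 beta_lt_half.
have b10 : 1 - beta != 0 by apply/eqP => b1; lra.
set r := beta / (1 - beta).
have b1p : 0 < 1 - beta by lra.
have r0 : 0 <= r by rewrite divr_ge0 // ltW.
have r_lt1 : `|r| < 1 by rewrite ger0_norm // ltr_pdivrMr // mul1r; lra.
have -> : S_coef_sum = series (geometric (1 - beta)^-1 r).
  apply/funext => n; rewrite /series /S_coef_sum /= big_mkord; apply: eq_bigr => i _.
  rewrite /S_coef subSS subn0 /r exprMn exprVn exprS; field.
  by rewrite b10 expf_neq0.
have -> : (1 - 2 * beta)^-1 = (1 - beta)^-1 * (1 - r)^-1.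
  by rewrite /r; field; rewrite b10 /=; apply/eqP => b; lra.
exact: cvg_geometric_series.
Qed.

Lemma child_avg_S_val x : 0 <= beta -> beta < 1 / 2 -> (forall y, S_conv beta h y) ->
  child_avg (S_val beta h) x = S_val beta h x - h x * (1 - 2 * beta)^-1.
Proof.
move=> beta_ge0 beta_lt_half S_cvg.
have lhs : child_avg (fun y => S_partial beta h y n) x @[n --> \oo] -->
    child_avg (S_val beta h) x.
  by apply: child_avg_cvg => i; exact: S_cvg.
have rhs : S_partial beta h x n.+1 - h x * S_coef_sum n.+1 @[n --> \oo] -->
    S_val beta h x - h x * (1 - 2 * beta)^-1.
  apply: cvgB; first by rewrite (cvg_shiftS (S_partial beta h x)); exact: S_cvg.
  by apply: cvgMl_tmp; rewrite (cvg_shiftS S_coef_sum); exact: S_coef_sum_cvg.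
move: lhs; rewrite (_ : (fun n => _) = fun n =>
    S_partial beta h x n.+1 - h x * S_coef_sum n.+1); last first.
  by apply/funext => n; rewrite child_avg_S_partial.
by move=> lhs; exact: cvg_unique lhs rhs.
Qed.

End SeriesS.

Lemma weighted_sum_rec (R : realType) (r : R) (g : nat -> R) k :
  \sum_(1 <= j < k.+2) r ^+ (k.+1 - j) * g j =
  r * \sum_(1 <= j < k.+1) r ^+ (k - j) * g j + g k.+1.
Proof.
rewrite big_nat_recr //= subnn expr0 mul1r; congr (_ + _).
rewrite mulr_sumr; apply: eq_big_nat => j /andP [_ jk].
by rewrite subSn // exprS mulrA.
Qed.

Lemma geometric_weights_sum (R : realType) (r : R) k :
  (1 - r) * \sum_(1 <= j < k.+1) r ^+ (k - j) = 1 - r ^+ k.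
Proof.
elim: k => [|k IH]; first by rewrite big_geq // mulr0 expr0 subrr.
have := weighted_sum_rec r (fun _ => 1) k.
under eq_bigr do rewrite mulr1; under [in RHS]eq_bigr do rewrite mulr1.
by move=> ->; rewrite mulrDr mulr1 mulrCA IH exprS; ring.
Qed.

Section PathSums.
Variables (R : realType) (m : nat).
Hypothesis m_gt0 : (0 < m)%N.
Implicit Types (r beta : R) (D E : node m -> R) (x : node m).

Definition path_sum r D x : R :=
  \sum_(1 <= j < (size x).+1) r ^+ (size x - j) * D (take j x).

Lemma path_sum_rcons r D x i :
  path_sum r D (rcons x i) = r * path_sum r D x + D (rcons x i).
Proof.
rewrite /path_sum size_rcons weighted_sum_rec.
congr (_ * _ + _); last by rewrite -(size_rcons x i) take_size.
apply: eq_big_nat => j /andP [_ jx].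
by rewrite -cats1 takel_cat.
Qed.

Lemma path_sum_lin r (a b : R) D E x :
  path_sum r (fun y => a * D y + b * E y) x = a * path_sum r D x + b * path_sum r E x.
Proof. by rewrite /path_sum !mulr_sumr -big_split /=; apply: eq_bigr => j _; ring. Qed.

Lemma path_sum_S_le_S_sup beta (h : node m -> R) x :
  `|path_sum (beta / (1 - beta)) (S_val beta h) x| <= S_sup beta h (size x).
Proof.
exact: (le_bigmax 0 (fun t : (size x).-tuple 'I_m => `|\sum_(1 <= j < (size x).+1)
   (beta / (1 - beta)) ^+ (size x - j) * S_val beta h (anc (tval t) j)|) (in_tuple x)).
Qed.

(* With r = beta / (1 - beta), the weight r at the parent exactly compensates the
   drift beta of L, so L (path_sum r D) only sees D - child_avg D. *)
Lemma Lop_path_sum beta D E x i : beta != 1 ->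
  child_avg D (rcons x i) = D (rcons x i) - E (rcons x i) ->
  Lop beta (path_sum (beta / (1 - beta)) D) (rcons x i) = (1 - beta) * E (rcons x i).
Proof.
move=> beta_neq1 DE; set r := beta / (1 - beta).
have b10 : 1 - beta != 0 by rewrite subr_eq0 eq_sym.
rewrite Lop_rcons.
have -> : child_avg (path_sum r D) (rcons x i) =
    r * path_sum r D (rcons x i) + child_avg D (rcons x i).
  rewrite (@eq_child_avg _ _ _ (fun y => r * path_sum r D (rcons x i) + D y)).
    by rewrite child_avgD child_avg_cst.
  by move=> j; rewrite path_sum_rcons.
by rewrite DE !path_sum_rcons /r; field; rewrite b10.
Qed.

Lemma Lop_geometric_rcons beta x i : beta != 1 ->
  Lop beta (fun y => (beta / (1 - beta)) ^+ size y) (rcons x i) = 0.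
Proof.
move=> beta_neq1; have b10 : 1 - beta != 0 by rewrite subr_eq0 eq_sym.
rewrite Lop_rcons (@eq_child_avg _ _ _ (fun=> (beta / (1 - beta)) ^+ (size x).+2)).
  by rewrite child_avg_cst // size_rcons !exprS; field; rewrite b10.
by move=> j; rewrite !size_rcons.
Qed.

Lemma Lop_geometric_nil beta :
  Lop beta (fun y : node m => (beta / (1 - beta)) ^+ size y) [::] = 1 - beta / (1 - beta).
Proof.
rewrite Lop_nil (@eq_child_avg _ _ _ (fun=> (beta / (1 - beta)) ^+ 1)).
  by rewrite child_avg_cst // expr1 expr0.
by move=> j; rewrite size_rcons.
Qed.

End PathSums.

Lemma geometric_weighted_sum_le (R : realType) (r e B : R) k N0 (E : nat -> R) :
  0 <= r -> r <= 1 -> (1 <= N0)%N -> (N0 <= k)%N -> 0 <= e ->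
  (forall j, (j <= k)%N -> 0 <= E j <= B) ->
  (forall j, (N0 <= j)%N -> (j <= k)%N -> E j <= e) ->
  \sum_(1 <= j < k.+1) (1 - r) * r ^+ (k - j) * E j <= e + N0%:R * B * r ^+ (k - N0).
Proof.
move=> r0 r1 N0_gt0 N0k e0 EB Ee.
have r1' : 0 <= 1 - r by lra.
have B0 : 0 <= B by have /andP [/le_trans] := EB 0%N (leq0n _); apply.
apply: (@le_trans _ _ (\sum_(1 <= j < k.+1)
   (e * ((1 - r) * r ^+ (k - j)) + (j < N0)%N%:R * (B * r ^+ (k - N0))))).
  apply: ler_sum_nat => j /andP [_ jk]; rewrite ltnS in jk.
  have /andP [Ej0 EjB] := EB j jk.
  have w0 : 0 <= (1 - r) * r ^+ (k - j) by rewrite mulr_ge0 // exprn_ge0.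
  case: (ltnP j N0) => jN0 /=.
    rewrite mul1r -[X in X <= _]add0r; apply: lerD; first exact: mulr_ge0.
    rewrite [leRHS]mulrC -[leRHS]mul1r -mulrA; apply: ler_pM => //.
      by rewrite mulr_ge0 // exprn_ge0.
      by lra.
    apply: ler_pM => //; first by rewrite exprn_ge0.
    by apply: ler_wiXn2l => //; apply: leq_sub2l; apply: ltnW.
  by rewrite mul0r addr0 [leRHS]mulrC ler_wpM2l // Ee.
rewrite big_split /= -mulr_sumr -mulr_suml; apply: lerD.
  by rewrite -[leRHS]mulr1 ler_wpM2l // -mulr_sumr geometric_weights_sum lerBlDr lerDl exprn_ge0.
rewrite mulrA ler_wpM2r ?exprn_ge0 // ler_wpM2r //.
rewrite (big_cat_nat (n := N0)) //=; last exact: leq_trans N0k _.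
rewrite [X in _ + X]big_nat_cond [X in _ + X]big1; last first.
  by move=> j /andP [/andP [jN0 _] _]; rewrite ltnNge jN0.
rewrite addr0 (eq_big_nat _ _ (F2 := fun _ => 1)); last by move=> j /andP [_ ->].
by rewrite sumr_const_nat ler_nat leq_subr.
Qed.

Section Dirichlet.
Variables (R : realType) (m : nat) (beta : R) (h : node m -> R) (f : R -> R).
Hypothesis m_gt1 : (1 < m)%N.
Let m_gt0 : (0 < m)%N := ltnW m_gt1.
Hypothesis f_cont : {within `[0, 1], continuous f}.
Hypotheses (beta_ge0 : 0 <= beta) (beta_lt_half : beta < 1 / 2).
Let r := beta / (1 - beta).

Let beta_lt1 : 0 < 1 - beta. Proof. by move: beta_lt_half; lra. Qed.
Let r_ge0 : 0 <= r. Proof. exact: divr_ge0 beta_ge0 (ltW beta_lt1). Qed.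
Let r_lt1 : r < 1.
Proof. by rewrite ltr_pdivrMr // mul1r; move: beta_lt_half; lra. Qed.

Lemma path_avg_mv_ext_close (e d M : R) N0 (x : node m) (z : branch m) :
  unif_modulus f e d -> (forall s, 0 <= s <= 1 -> `|f s| <= M) ->
  (forall n, (N0 <= n)%N -> (m%:R ^+ n)^-1 < d) ->
  (1 <= N0)%N -> (N0 <= size x)%N -> passes z x -> 0 <= e ->
  `|(1 - r) * path_sum r (mv_ext f) x - (1 - r ^+ size x) * f (psi R z)|
    <= e + N0%:R * (2 * M) * r ^+ (size x - N0).
Proof.
move=> f_mod fM mN0 N0_gt0 N0x zx e0; set k := size x; set t := psi R z.
have -> : (1 - r) * path_sum r (mv_ext f) x - (1 - r ^+ k) * f t =
    \sum_(1 <= j < k.+1) (1 - r) * r ^+ (k - j) * (mv_ext f (take j x) - f t).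
  rewrite -geometric_weights_sum /path_sum -/k !mulr_sumr mulr_suml -sumrB.
  by apply: eq_bigr => j _; ring.
apply: le_trans (ler_norm_sum _ _ _) _.
have w0 j : 0 <= (1 - r) * r ^+ (k - j) by rewrite mulr_ge0 ?exprn_ge0 // subr_ge0 ltW.
under eq_bigr => j _ do rewrite normrM (ger0_norm (w0 j)).
have t01 := psi_in01 R m_gt0 z.
apply: geometric_weighted_sum_le => //; first exact: ltW.
  move=> j jk; rewrite normr_ge0 /= (le_trans (ler_normB _ _)) // mulr2n mulrDl mul1r.
  by apply: lerD; [exact: mv_ext_bounded | exact: fM].
move=> j N0j jk; have zj := passes_take zx jk.
apply: (mv_ext_close m_gt1 f_cont f_mod) => //; last exact: psi_in_cell.
by rewrite size_takel //; apply: mN0.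
Qed.

(* D carries h through S^beta_h and f through its mean-value extension; the multiple
   of r^|y|, which is L-harmonic off the root, corrects the equation at the root. *)
Definition dirichlet_data (y : node m) : R :=
  (1 - r) * S_val beta h y + (1 - r) * mv_ext f y.

Definition dirichlet_shift : R :=
  (h [::] - Lop beta (path_sum r dirichlet_data) [::]) / (1 - r).

Definition dirichlet_sol (y : node m) : R :=
  path_sum r dirichlet_data y + dirichlet_shift * r ^+ size y.

Lemma Lop_dirichlet_sol : (forall y, S_conv beta h y) ->
  forall x, Lop beta dirichlet_sol x = h x.
Proof.
move=> S_cvg x.
have r1 : 1 - r != 0 by rewrite subr_eq0 eq_sym lt_eqF.
have beta_neq1 : beta != 1 by rewrite eq_sym -subr_eq0 gt_eqF.
have beta2 : 1 - 2 * beta != 0 by apply/eqP; move: beta_lt_half; lra.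
rewrite /dirichlet_sol; case/lastP: x => [|x i]; rewrite Lop_lin.
  by rewrite Lop_geometric_nil // /dirichlet_shift -/r; field.
rewrite Lop_geometric_rcons // mulr0 addr0.
rewrite (Lop_path_sum m_gt0 (E := fun y => (1 - r) * (h y * (1 - 2 * beta)^-1))) //.
  by rewrite /r; field; rewrite beta2 gt_eqF.
rewrite /dirichlet_data child_avgD !child_avgZ child_avg_S_val //.
by rewrite child_avg_mv_ext //; ring.
Qed.

Lemma dirichlet_sol_boundary : S_sup beta h @ \oo --> (0 : R) ->
  boundary_eq dirichlet_sol f.
Proof.
move=> S_sup0 e e0; set a := dirichlet_shift.
have [M fM] := bounded01 f_cont.
have M0 : 0 <= M by apply: le_trans (normr_ge0 (f 0)) (fM 0 _); rewrite lexx ler01.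
set e4 := e / 4; have e4_gt0 : 0 < e4 by rewrite divr_gt0.
have [d d0 f_mod] := unif_continuous01 f_cont e4_gt0.
have [N0' mN0] := inv_expr_lt_eventually m_gt1 d0; set N0 := N0'.+1.
have /cvgr_dist_lt /(_ e4 e4_gt0) [K1 _ S_small] := S_sup0.
set C := N0%:R * (2 * M) + M + `|a|.
have C0 : 0 <= C by rewrite !addr_ge0 // mulr_ge0 // mulr_ge0.
have [K2 rC_small] := expr_scale_lt_eventually r_ge0 r_lt1 C0 e4_gt0.
exists (K1 + N0 + K2)%N => x z xK zx; set k := size x; set t := psi R z.
have N0k : (N0 <= k)%N by lia.
set rho := r ^+ (k - N0); have rho0 : 0 <= rho by rewrite exprn_ge0.
have rhoC : rho * C < e4 by apply: rC_small; lia.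
have S_part : `|(1 - r) * path_sum r (S_val beta h) x| < e4.
  rewrite normrM ger0_norm ?subr_ge0 ?ltW //.
  apply: le_lt_trans (ler_piMl _ _) _; [exact: normr_ge0 | by rewrite lerBlDr lerDl |].
  apply: le_lt_trans (path_sum_S_le_S_sup _ _ _) _.
  have := S_small k (ltac:(lia) : (K1 <= k)%N).
  by rewrite /= sub0r normrN; apply: le_lt_trans; exact: ler_norm.
have w_part := path_avg_mv_ext_close f_mod fM (fun n N0n => mN0 n (ltnW N0n))
  isT N0k zx (ltW e4_gt0).
have a_part : `|r ^+ k * (a - f t)| <= rho * (`|a| + M).
  rewrite normrM ger0_norm ?exprn_ge0 //.
  apply: ler_pM; [exact: exprn_ge0 | exact: normr_ge0 | |].
    by rewrite /rho; apply: ler_wiXn2l => //; [exact: ltW | exact: leq_subr].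
  by apply: le_trans (ler_normB _ _) _; rewrite lerD2l fM // psi_in01.
have -> : dirichlet_sol x - f t = (1 - r) * path_sum r (S_val beta h) x +
    ((1 - r) * path_sum r (mv_ext f) x - (1 - r ^+ k) * f t) + r ^+ k * (a - f t).
  by rewrite /dirichlet_sol /dirichlet_data path_sum_lin -/a -/k; ring.
have e_eq : e = 4 * e4 by rewrite /e4; field.
have CE : N0%:R * (2 * M) * rho + rho * (`|a| + M) = rho * C by rewrite /C; ring.
apply: le_lt_trans (ler_normD _ _) _.
apply: le_lt_trans (lerD (ler_normD _ _) (lexx _)) _.
move: S_part w_part a_part rhoC; rewrite -/k -/t -/rho -/N0; lra.
Qed.

End Dirichlet.

Section Ball.
Variables (R : realType) (m : nat).

Lemma finite_ball N : finite_set [set x : node m | (size x <= N)%N].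
Proof.
apply: (@sub_finite_set _ _ (\bigcup_(k in `I_N.+1) range (fun t : k.-tuple 'I_m => tval t))).
  by move=> x /= xN; exists (size x) => //=; exists (in_tuple x).
apply: bigcup_finite; first exact: finite_II.
by move=> k _; apply: finite_image; apply: finite_finset.
Qed.

Lemma ball_bounded (F : node m -> R) N :
  exists2 C, 0 <= C & forall x, (size x <= N)%N -> F x <= C.
Proof.
exists (\sum_(k < N.+1) \sum_(t : k.-tuple 'I_m) `|F t|).
  by rewrite !sumr_ge0 // => k _; rewrite sumr_ge0.
move=> x xN; apply: le_trans (ler_norm _) _.
rewrite (bigD1 (Ordinal (xN : (size x < N.+1)%N))) //= (bigD1 (in_tuple x)) //=.
by rewrite -addrA lerDl; apply: addr_ge0; apply: sumr_ge0 => *; rewrite ?sumr_ge0.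
Qed.

Lemma passes_nth (i0 : 'I_m) (x : node m) : passes (fun k => nth i0 x k) x.
Proof. by rewrite /passes mkseq_nth. Qed.

End Ball.

Section TailExtension.
Variables (R : realType) (m : nat) (N : nat) (V : node m -> R) (r : R).
Implicit Types (w : node m -> R) (x : node m).

(* For r = beta / (1 - beta) the damped defect term is L-harmonic, so that
   L (tail_ext w) = L V beyond level N. *)
Definition tail_ext w x : R :=
  if (size x <= N)%N then w x
  else V x + (w (take N x) - V (take N x)) * r ^+ (size x - N).

Lemma tail_ext_in w x : (size x <= N)%N -> tail_ext w x = w x.
Proof. by rewrite /tail_ext => ->. Qed.

Lemma tail_ext_out w x : (N <= size x)%N ->
  tail_ext w x = V x + (w (take N x) - V (take N x)) * r ^+ (size x - N).
Proof.
move=> Nx; rewrite /tail_ext; case: leqP => // xN.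
have {Nx xN} <- : size x = N by apply/eqP; rewrite eqn_leq xN Nx.
by rewrite take_size subnn expr0 mulr1 addrC subrK.
Qed.

Hypothesis r_ge0 : 0 <= r.

Lemma le_tail_ext w w' x : (forall y, (size y <= N)%N -> w y <= w' y) ->
  tail_ext w x <= tail_ext w' x.
Proof.
move=> ww'; rewrite /tail_ext; case: leqP => xN; first exact: ww'.
by rewrite lerD2l ler_wpM2r ?exprn_ge0 // lerD2r ww' // size_take xN.
Qed.

Lemma tail_ext_le w x : (forall y, (size y <= N)%N -> w y <= V y) -> tail_ext w x <= V x.
Proof.
move=> wV; rewrite /tail_ext; case: leqP => xN; first exact: wV.
by rewrite gerDl mulr_le0_ge0 ?exprn_ge0 // subr_le0 wV // size_take xN.
Qed.

End TailExtension.

Section TailExtensionLop.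
Variables (R : realType) (m : nat) (N : nat) (V : node m -> R) (beta : R).
Hypothesis m_gt0 : (0 < m)%N.
Hypotheses (beta_ge0 : 0 <= beta) (beta_lt1 : beta < 1).
Let r := beta / (1 - beta).
Let r_ge0 : 0 <= r. Proof. by rewrite divr_ge0 // subr_ge0 ltW. Qed.
Implicit Types (w : node m -> R) (x : node m).

Lemma Lop_tail_ext_out w x : (N < size x)%N ->
  Lop beta (tail_ext N V r w) x = Lop beta V x.
Proof.
have b10 : 1 - beta != 0 by rewrite subr_eq0 eq_sym lt_eqF.
case/lastP: x => [|p i] //; rewrite size_rcons ltnS => Np.
set c := w (take N p) - V (take N p).
have take_cat s : take N (p ++ s) = take N p by rewrite takel_cat.
have ext_cat s : tail_ext N V r w (p ++ s) = V (p ++ s) + c * r ^+ (size p + size s - N).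
  by rewrite tail_ext_out ?size_cat ?(leq_trans Np (leq_addr _ _)) // take_cat.
have ext_p : tail_ext N V r w p = V p + c * r ^+ (size p - N).
  by have := ext_cat [::]; rewrite cats0 addn0.
have ext_pi : tail_ext N V r w (rcons p i) = V (rcons p i) + c * r ^+ (size p - N).+1.
  by rewrite -cats1 ext_cat addn1 subSn.
rewrite !Lop_rcons ext_p ext_pi.
rewrite (@eq_child_avg _ _ _ (fun y => V y + c * r ^+ (size p - N).+2)); last first.
  by move=> j; rewrite -!cats1 -catA ext_cat addn2 !subSn ?leqW.
rewrite child_avgD child_avg_cst // !exprS /r.
by field; rewrite b10.
Qed.

Lemma Lop_tail_ext_le w w' x : (size x <= N)%N ->
  (forall y, (size y <= N)%N -> w y <= w' y) ->
  Lop beta (tail_ext N V r w') x <= Lop beta (tail_ext N V r w) x + (w' x - w x).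
Proof.
move=> xN ww'; rewrite -lerBlDl.
have := Lop_le_of_ge0 beta_ge0 (ltW beta_lt1)
  (d := fun y => tail_ext N V r w' y - tail_ext N V r w y) x.
rewrite LopB !tail_ext_in //; apply => y.
by rewrite subr_ge0; apply: le_tail_ext.
Qed.

End TailExtensionLop.

Section Obstacle.
Variables (R : realType) (m : nat) (beta : R) (h U V : node m -> R) (N : nat).
Hypothesis m_gt0 : (0 < m)%N.
Hypotheses (beta_ge0 : 0 <= beta) (beta_lt_half : beta < 1 / 2).
Hypothesis LV : forall x, Lop beta V x = h x.
Hypothesis V_lt_U : forall x, (N <= size x)%N -> V x < U x.
Let r := beta / (1 - beta).
Let beta_lt1 : beta < 1. Proof. by move: beta_lt_half; lra. Qed.
Let r_ge0 : 0 <= r. Proof. by rewrite divr_ge0 // subr_ge0 ltW. Qed.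
Let r_lt1 : r < 1.
Proof. by rewrite ltr_pdivrMr ?subr_gt0 // mul1r; move: beta_lt_half; lra. Qed.
Implicit Types (w : node m -> R) (x : node m).

Definition subsol w : Prop := forall x, (size x <= N)%N ->
  [/\ w x <= U x, w x <= V x & Lop beta (tail_ext N V r w) x <= h x].

Definition perron x : R := sup [set y | exists2 w, subsol w & y = w x].

Lemma subsol_shift : exists2 C, 0 <= C & subsol (fun y => V y - C).
Proof.
have [C C0 VUC] := ball_bounded (fun x => V x - U x) N.
exists C => // x xN; split; first by rewrite lerBlDr -lerBlDl VUC.
  by rewrite gerBl.
rewrite -LV -subr_ge0 -LopB; apply: (Lop_ge0_at_max m_gt0 beta_ge0 (ltW beta_lt1)) => y.
have -> : V x - tail_ext N V r (fun y => V y - C) x = C.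
  by rewrite tail_ext_in // opprB addrC subrK.
rewrite /tail_ext; case: leqP => _; first by rewrite opprB addrC subrK.
rewrite (_ : _ - _ = C * r ^+ (size y - N)); last by ring.
by rewrite ler_piMr // exprn_ile1 // ltW.
Qed.

Lemma perron_has_sup x : (size x <= N)%N -> has_sup [set y | exists2 w, subsol w & y = w x].
Proof.
have [C _ w0_sub] := subsol_shift.
move=> xN; split; first by exists (V x - C), (fun y => V y - C).
by exists (U x) => y [w w_sub ->]; case: (w_sub x xN).
Qed.

Lemma subsol_le_perron w x : subsol w -> (size x <= N)%N -> w x <= perron x.
Proof. by move=> w_sub xN; apply: sup_upper_bound (perron_has_sup xN) _ _; exists w. Qed.

Lemma perron_le_UV x : (size x <= N)%N -> perron x <= U x /\ perron x <= V x.
Proof.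
move=> xN; have [ne _] := perron_has_sup xN.
by split; apply: ge_sup ne _ => _ [w w_sub ->]; case: (w_sub x xN).
Qed.

Lemma subsol_perron : subsol perron.
Proof.
move=> x xN; have [pU pV] := perron_le_UV xN; split => //.
apply/ler_addgt0Pr => eta eta0.
have [_ [w w_sub ->] w_near] := sup_adherent eta0 (perron_has_sup xN).
pose w' y := if y == x then w x else perron y.
have w'_le : forall y, (size y <= N)%N -> w' y <= perron y.
  by move=> y yN; rewrite /w'; case: eqP => [->|_] //; exact: subsol_le_perron.
have w_le : forall y, (size y <= N)%N -> w y <= w' y.
  by move=> y yN; rewrite /w'; case: eqP => [->|_] //; exact: subsol_le_perron.
have L_w' : Lop beta (tail_ext N V r w') x <= Lop beta (tail_ext N V r w) x.
  by have := Lop_tail_ext_le V beta_ge0 beta_lt1 xN w_le; rewrite /w' eqxx subrr addr0.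
have L_perron : Lop beta (tail_ext N V r perron) x <=
    Lop beta (tail_ext N V r w') x + (perron x - w x).
  by have := Lop_tail_ext_le V beta_ge0 beta_lt1 xN w'_le; rewrite /w' eqxx.
have [_ _ L_w] := w_sub x xN; have w_near' : perron x - eta < w x := w_near.
lra.
Qed.

Lemma Lop_perron_contact x : (size x <= N)%N -> perron x = V x ->
  h x <= Lop beta (tail_ext N V r perron) x.
Proof.
move=> xN pV; rewrite -LV -subr_le0 -LopB.
have := Lop_le_of_ge0 beta_ge0 (ltW beta_lt1)
  (d := fun y => V y - tail_ext N V r perron y) x.
rewrite tail_ext_in // pV subrr; apply => y; rewrite subr_ge0.
by apply: tail_ext_le => // z zN; have [] := perron_le_UV zN.
Qed.

(* Otherwise perron could be raised at x, contradicting its maximality. *)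
Lemma Lop_perron_free x : (size x <= N)%N -> perron x < U x -> perron x < V x ->
  h x <= Lop beta (tail_ext N V r perron) x.
Proof.
move=> xN pU pV; rewrite leNgt; apply/negP => L_lt.
set eps := Num.min (U x - perron x)
  (Num.min (V x - perron x) (h x - Lop beta (tail_ext N V r perron) x)).
have eps_gt0 : 0 < eps by rewrite !lt_min !subr_gt0 pU pV L_lt.
have [eps_U eps_V eps_L] : [/\ eps <= U x - perron x, eps <= V x - perron x &
    eps <= h x - Lop beta (tail_ext N V r perron) x].
  by rewrite !ge_min !lexx !orbT.
pose w y := if y == x then perron x + eps else perron y.
have perron_le_w y : (size y <= N)%N -> perron y <= w y.
  by rewrite /w; case: eqP => [->|_] _ //; rewrite lerDl ltW.
suff /subsol_le_perron /(_ xN) : subsol w by rewrite /w eqxx gerDl leNgt eps_gt0.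
move=> y yN; have := Lop_tail_ext_le V beta_ge0 beta_lt1 yN perron_le_w.
have [pUy pVy L_y] := subsol_perron yN.
rewrite /w; case: eqP => [->|_].
  by rewrite addrAC subrr add0r => L_x; split; lra.
by rewrite subrr addr0 => L_y'; split => //; apply: le_trans L_y' L_y.
Qed.

Lemma Lop_perron x : (size x <= N)%N -> perron x < U x ->
  Lop beta (tail_ext N V r perron) x = h x.
Proof.
move=> xN pU; have [_ pV L_le] := subsol_perron xN.
apply/eqP; rewrite eq_le L_le /=.
rewrite le_eqVlt in pV; case/orP: pV => [/eqP pV|pV].
  exact: Lop_perron_contact.
exact: Lop_perron_free.
Qed.

Definition obstacle_sol : node m -> R := tail_ext N V r perron.

Lemma obstacle_sol_le_V x : obstacle_sol x <= V x.
Proof. by apply: tail_ext_le => // y yN; have [] := perron_le_UV yN. Qed.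

Lemma obstacle_sol_lt_U x : (N <= size x)%N -> obstacle_sol x < U x.
Proof. by move=> Nx; apply: le_lt_trans (obstacle_sol_le_V x) (V_lt_U Nx). Qed.

Lemma obstacle_sol_le_U x : obstacle_sol x <= U x.
Proof.
have [xN|/ltnW Nx] := leqP (size x) N; last exact/ltW/obstacle_sol_lt_U.
by rewrite /obstacle_sol tail_ext_in //; have [] := perron_le_UV xN.
Qed.

Lemma Lop_obstacle_sol x :
  Lop beta obstacle_sol x <= h x /\ (obstacle_sol x < U x -> Lop beta obstacle_sol x = h x).
Proof.
have [xN|Nx] := leqP (size x) N.
  have [_ _ L_le] := subsol_perron xN; split => // vU.
  by apply: Lop_perron; move: vU; rewrite /obstacle_sol tail_ext_in.
by rewrite /obstacle_sol Lop_tail_ext_out // LV.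
Qed.

Lemma obstacle_complementarity x :
  Num.min (- Lop beta obstacle_sol x + h x) (U x - obstacle_sol x) = 0.
Proof.
have [L_le L_eq] := Lop_obstacle_sol x.
have [vU|Uv] := ltP (obstacle_sol x) (U x).
  by rewrite L_eq // addNr min_l // subr_ge0 ltW.
have -> : U x - obstacle_sol x = 0.
  by apply/eqP; rewrite subr_eq0 eq_le Uv obstacle_sol_le_U.
by rewrite min_r // addrC subr_ge0.
Qed.

Lemma obstacle_sol_boundary (g : R -> R) : boundary_eq V g -> boundary_eq obstacle_sol g.
Proof.
move=> bV e e0; have e20 : 0 < e / 2 by rewrite divr_gt0.
have [K VK] := bV _ e20; have [C C0 VC_sub] := subsol_shift.
have [K' rC_small] := expr_scale_lt_eventually r_ge0 r_lt1 C0 e20.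
exists (N + K + K')%N => x z xK zx.
have Nx : (N <= size x)%N by lia.
have xN : (size (take N x) <= N)%N by rewrite size_takel.
have Vg := VK x z (ltac:(lia) : (K <= size x)%N) zx.
rewrite /obstacle_sol tail_ext_out //; set rho := r ^+ (size x - N).
have rho0 : 0 <= rho by rewrite exprn_ge0.
have rhoC : rho * C < e / 2 by apply: rC_small; lia.
set c := perron (take N x) - V (take N x).
have c_bound : `|c * rho| <= rho * C.
  have c_lo : V (take N x) - C <= perron (take N x) := subsol_le_perron VC_sub xN.
  have [_ c_hi] := perron_le_UV xN.
  rewrite normrM (ger0_norm rho0) mulrC ler_wpM2l // ler_norml /c.
  by apply/andP; split; lra.
rewrite (_ : _ - _ = (V x - g (psi R z)) + c * rho); last by ring.
by apply: le_lt_trans (ler_normD _ _) _; lra.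
Qed.

Lemma finite_contact : finite_set [set x | U x = obstacle_sol x].
Proof.
apply: sub_finite_set (finite_ball m N) => x /= Uv.
by case: leqP => // /ltnW /obstacle_sol_lt_U; rewrite Uv ltxx.
Qed.

End Obstacle.

Lemma boundary_eq_gap (R : realType) (m : nat) (U V : node m -> R) (f g : R -> R) :
  (0 < m)%N -> {within `[0, 1], continuous f} -> {within `[0, 1], continuous g} ->
  (forall s, 0 <= s <= 1 -> g s < f s) -> boundary_eq U f -> boundary_eq V g ->
  exists N, forall x : node m, (N <= size x)%N -> V x < U x.
Proof.
move=> m_gt0 f_cont g_cont gf bU bV.
have [c c01 c_min] := EVT_min (@ler01 R) (within_continuousB f_cont g_cont).
have delta_gt0 : 0 < (f c - g c) / 2.
  by rewrite divr_gt0 // subr_gt0 gf //; rewrite in_itv in c01.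
have [K1 UK] := bU _ delta_gt0; have [K2 VK] := bV _ delta_gt0.
exists (K1 + K2)%N => x xK.
set z : branch m := fun k => nth (Ordinal m_gt0) x k.
have zx : passes z x := passes_nth _ x.
have t01 := psi_in01 R m_gt0 z.
have := c_min (psi R z) (ltac:(by rewrite in_itv)).
have := UK x _ (ltac:(lia)) zx; have := VK x _ (ltac:(lia)) zx.
by rewrite !ltr_distl !fctE => /andP [? ?] /andP [? ?]; lra.
Qed.

Theorem theorem1p1 (R : realType) (m : nat) (hm : (2 <= m)%N)
  (beta1 beta2 : R) (h1 h2 : node m -> R) (f g : R -> R) :
  {within `[0, 1], continuous f} ->
  {within `[0, 1], continuous g} ->
  (forall s : R, 0 <= s <= 1 -> g s < f s) ->
  0 <= beta1 -> beta1 < 1 / 2 ->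
  0 <= beta2 -> beta2 < 1 / 2 ->
  (forall x : node m, S_conv beta1 h1 x) ->
  (forall x : node m, S_conv beta2 h2 x) ->
  S_sup beta1 h1 @ \oo --> (0 : R) ->
  S_sup beta2 h2 @ \oo --> (0 : R) ->
  exists u v : node m -> R,
    (forall x : node m,
        Num.max (- Lop beta1 u x + h1 x) (v x - u x) = 0 /\
        Num.min (- Lop beta2 v x + h2 x) (u x - v x) = 0) /\
    boundary_eq u f /\ boundary_eq v g /\
    finite_set [set x : node m | u x = v x].
Proof.
move=> f_cont g_cont gf b1_ge0 b1_lt b2_ge0 b2_lt S1_cvg S2_cvg S1_sup S2_sup.
have m_gt0 : (0 < m)%N by apply: ltnW.
set U := dirichlet_sol beta1 h1 f; set V := dirichlet_sol beta2 h2 g.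
have LU := Lop_dirichlet_sol hm f_cont b1_ge0 b1_lt S1_cvg.
have LV := Lop_dirichlet_sol hm g_cont b2_ge0 b2_lt S2_cvg.
have bU := dirichlet_sol_boundary hm f_cont b1_ge0 b1_lt S1_sup.
have bV := dirichlet_sol_boundary hm g_cont b2_ge0 b2_lt S2_sup.
have [N V_lt_U] := boundary_eq_gap m_gt0 f_cont g_cont gf bU bV.
exists U, (obstacle_sol beta2 h2 U V N); split; last split.
- move=> x; split; last exact: obstacle_complementarity.
  by rewrite LU addNr max_l // subr_le0 (obstacle_sol_le_U m_gt0 b2_ge0 b2_lt LV V_lt_U).
- exact: bU.
split; first exact: obstacle_sol_boundary.
exact: finite_contact.
Qed.
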